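(* Let $\phi:\mathbb{M}_n\to\mathbb{M}_m$ be a positive linear map with Hilbert–Schmidt adjoint $\phi^*$. The following are equivalent: (1) $\phi(K^*K)\geq\phi(K)^*\phi(K)$ for all $K\in\mathbb{M}_n$; (2) for every positive definite $X\in\mathbb{M}_m$, the block operator \[ \begin{pmatrix} R_{\phi^*(X)} & \phi^*\\ \phi & R_X^{-1}\end{pmatrix}\in B(\mathcal{H}_n\oplus\mathcal{H}_m) \] is positive semidefinite.
   Context: $\mathcal{H}_n$ denotes $\mathbb{M}_n$ (complex $n\times n$ matrices) equipped with the Hilbert–Schmidt inner product $\langle A,B\rangle=\mathrm{Tr}[A^*B]$; $\phi$ is viewed as an operator $\mathcal{H}_n\to\mathcal{H}_m$ and $\phi^*:\mathcal{H}_m\to\mathcal{H}_n$ is its adjoint. For $X\in\mathbb{M}_k$, $R_X$ is the operator on $\mathcal{H}_k$ given by $R_X(A)=AX$. The block operator has $R_{\phi^*(X)}$ acting on $\mathcal{H}_n$, $\phi^*$ mapping $\mathcal{H}_m\to\mathcal{H}_n$, $\phi$ mapping $\mathcal{H}_n\to\mathcal{H}_m$, and $R_X^{-1}$ acting on $\mathcal{H}_m$. A positive map sends positive semidefinite matrices to positive semidefinite matrices. *)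

From HB Require Import structures.
From mathcomp Require Import all_boot all_order all_algebra.
From mathcomp Require Import reals.
From mathcomp.real_closed Require Import complex.
Set Implicit Arguments. Unset Strict Implicit. Unset Printing Implicit Defensive.
Import Order.TTheory GRing.Theory Num.Theory.
Local Open Scope ring_scope.

Section Defs.
Variable C : numClosedFieldType.

Definition ctr {p q} (A : 'M[C]_(p, q)) : 'M[C]_(q, p) := (map_mx Num.conj A)^T.

Definition hs {p} (A B : 'M[C]_p) : C := \tr (ctr A *m B).

Definition psdmx {k} (A : 'M[C]_k) : Prop :=
  ctr A = A /\ forall v : 'cV[C]_k, 0 <= (ctr v *m A *m v) 0 0.

Definition pdmx {k} (A : 'M[C]_k) : Prop :=
  ctr A = A /\ forall v : 'cV[C]_k, v != 0 -> 0 < (ctr v *m A *m v) 0 0.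

Definition loewner_le {k} (A B : 'M[C]_k) : Prop := psdmx (B - A).

Definition positive_map {n m} (phi : 'M[C]_n -> 'M[C]_m) : Prop :=
  forall A, psdmx A -> psdmx (phi A).

Definition hs_adjoint {n m} (phi : 'M[C]_n -> 'M[C]_m) (phis : 'M[C]_m -> 'M[C]_n)
  : Prop := forall (A : 'M[C]_n) (Y : 'M[C]_m), hs (phis Y) A = hs Y (phi A).

Definition Rop {k} (X : 'M[C]_k) : 'M[C]_k -> 'M[C]_k := fun A => A *m X.

(* the block operator [[R_{phi^*(X)}, phi^*], [phi, R_X^{-1}]] on H_n (+) H_m *)
Definition block_op {n m} (phi : 'M[C]_n -> 'M[C]_m) (phis : 'M[C]_m -> 'M[C]_n)
  (X : 'M[C]_m) (AB : 'M[C]_n * 'M[C]_m) : 'M[C]_n * 'M[C]_m :=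
  (Rop (phis X) AB.1 + phis AB.2, phi AB.1 + Rop (invmx X) AB.2).

Definition hs_sum {n m} (x y : 'M[C]_n * 'M[C]_m) : C := hs x.1 y.1 + hs x.2 y.2.

Definition psd_op {n m} (T : 'M[C]_n * 'M[C]_m -> 'M[C]_n * 'M[C]_m) : Prop :=
  forall x, 0 <= hs_sum x (T x).
End Defs.

From HB Require Import structures.
From mathcomp Require Import all_boot all_order all_algebra.
From mathcomp Require Import reals.
From mathcomp.real_closed Require Import complex.
From mathcomp Require Import ring.
Import Order.TTheory GRing.Theory Num.Theory.
Local Open Scope ring_scope.
Set Implicit Arguments. Unset Strict Implicit. Unset Printing Implicit Defensive.

(* Write L = phi K and F = phi (K^* K).  Using the adjoint and completing the
   square, the quadratic form of the block operator at (K, Y) is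
     tr ((L X + Y) X^-1 (L X + Y)^* ) + tr ((F - L^* L) X).
   The first term is nonnegative and vanishes at Y = - L X, so (2) holds iff
   tr ((F - L^* L) X) >= 0 for every X > 0.  Testing this with
   X = v v^* + e I and letting e -> 0 shows it is equivalent to
   F - L^* L >= 0, which is (1). *)

Section Matrices.
Variable C : numClosedFieldType.

Lemma ctrK p q (A : 'M[C]_(p, q)) : ctr (ctr A) = A.
Proof. by apply/matrixP => i j; rewrite !mxE conjCK. Qed.

Lemma ctrM p q r (A : 'M[C]_(p, q)) (B : 'M[C]_(q, r)) :
  ctr (A *m B) = ctr B *m ctr A.
Proof. by rewrite /ctr map_mxM trmx_mul. Qed.

Lemma ctrD p q (A B : 'M[C]_(p, q)) : ctr (A + B) = ctr A + ctr B.
Proof. by apply/matrixP => i j; rewrite !mxE rmorphD. Qed.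

Lemma ctrN p q (A : 'M[C]_(p, q)) : ctr (- A) = - ctr A.
Proof. by apply/matrixP => i j; rewrite !mxE rmorphN. Qed.

Lemma ctr0 p q : ctr (0 : 'M[C]_(p, q)) = 0.
Proof. by apply/matrixP => i j; rewrite !mxE rmorph0. Qed.

Lemma ctr_scalar k (a : C) : ctr (a%:M : 'M[C]_k) = a^*%:M.
Proof. by apply/matrixP => i j; rewrite !mxE eq_sym rmorphMn. Qed.

Lemma ctr_sesqui p q (A : 'M[C]_(p, q)) : ctr A = (A ^t Num.conj)%sesqui.
Proof. by rewrite /ctr map_trmx. Qed.

Lemma mxtrace_ctr k (A : 'M[C]_k) : \tr (ctr A) = (\tr A)^*.
Proof.
by rewrite /ctr mxtrace_tr /mxtrace rmorph_sum; apply: eq_bigr => i _; rewrite mxE.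
Qed.

Lemma hsC k (A B : 'M[C]_k) : hs A B = (hs B A)^*.
Proof. by rewrite /hs -mxtrace_ctr ctrM ctrK. Qed.

Lemma hsDr k (A B B' : 'M[C]_k) : hs A (B + B') = hs A B + hs A B'.
Proof. by rewrite /hs mulmxDr mxtraceD. Qed.

Lemma hermitian_mxtrace_real k (D : 'M[C]_k) : ctr D = D -> \tr D \is Num.real.
Proof. by move=> Dh; apply/CrealP; rewrite -mxtrace_ctr Dh. Qed.

Lemma hermitian_form_real k (D : 'M[C]_k) (v : 'cV[C]_k) :
  ctr D = D -> (ctr v *m D *m v) 0 0 \is Num.real.
Proof.
move=> Dh; apply/CrealP.
have -> : ((ctr v *m D *m v) 0 0)^* = ctr (ctr v *m D *m v) 0 0 by rewrite !mxE.
by rewrite !ctrM ctrK Dh mulmxA.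
Qed.

Lemma psdmx_congr_diag_ge0 p q (Z : 'M[C]_(p, q)) (P : 'M[C]_q) i :
  psdmx P -> 0 <= (Z *m P *m ctr Z) i i.
Proof.
move=> [_ HP]; have := HP (ctr (row i Z)); rewrite ctrK.
suff -> : (row i Z *m P *m ctr (row i Z)) 0 0 = (Z *m P *m ctr Z) i i by [].
rewrite !mxE; apply: eq_bigr => k _; rewrite !mxE; congr (_ * _).
by apply: eq_bigr => j _; rewrite mxE.
Qed.

Lemma psdmx_congr_trace_ge0 p q (Z : 'M[C]_(p, q)) (P : 'M[C]_q) :
  psdmx P -> 0 <= \tr (Z *m P *m ctr Z).
Proof. by move=> HP; apply: sumr_ge0 => i _; apply: psdmx_congr_diag_ge0. Qed.

Lemma psdmx1 k : psdmx (1%:M : 'M[C]_k).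
Proof.
split; first by rewrite ctr_scalar conjC1.
move=> v; rewrite mulmx1 mxE; apply: sumr_ge0 => i _; rewrite !mxE mulrC.
exact: mul_conjC_ge0.
Qed.

Lemma psdmx_gram p q (K : 'M[C]_(p, q)) : psdmx (ctr K *m K).
Proof.
split; first by rewrite ctrM ctrK.
move=> v; have := psdmx_congr_diag_ge0 (ctr (K *m v)) 0 (psdmx1 p).
by rewrite mulmx1 ctrK ctrM !mulmxA.
Qed.

(* Diagonalize X = U^* diag(d) U: then tr (D X) = sum_i (U D U^* )_ii d_i. *)
Lemma psdmx_trace_mul_ge0 k (D X : 'M[C]_k) :
  psdmx D -> psdmx X -> 0 <= \tr (D *m X).
Proof.
move=> HD HX.
have /orthomx_spectralP : X \is normalmx.
  by apply/normalmxP; rewrite -ctr_sesqui HX.1.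
set U := spectralmx X; set d := spectral_diag X => EX.
have UU : U *m ctr U = 1%:M by rewrite ctr_sesqui; apply/unitarymxP/spectral_unitarymx.
rewrite invmx_unitary ?spectral_unitarymx // -ctr_sesqui in EX.
have EUX : U *m X *m ctr U = diag_mx d.
  by rewrite EX !mulmxA UU mul1mx -mulmxA UU mulmx1.
rewrite EX !mulmxA mxtrace_mulC !mulmxA mul_mx_diag /mxtrace.
apply: sumr_ge0 => i _; rewrite mxE.
apply: mulr_ge0; first exact: psdmx_congr_diag_ge0.
by have := psdmx_congr_diag_ge0 U i HX; rewrite EUX mxE eqxx mulr1n.
Qed.

Lemma pdmx_psdmx k (X : 'M[C]_k) : pdmx X -> psdmx X.
Proof.
move=> [Xh HX]; split => // v; have [->|v0] := eqVneq v 0.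
  by rewrite mulmx0 mxE.
exact/ltW/HX.
Qed.

Lemma pdmx_unit k (X : 'M[C]_k) : pdmx X -> X \in unitmx.
Proof.
move=> [_ HX]; rewrite unitmxE unitfE; apply/negP => /det0P [v v0 vX].
have w0 : ctr v != 0 by apply: contraNneq v0 => h; rewrite -(ctrK v) h ctr0.
by have := HX _ w0; rewrite ctrK vX mul0mx mxE ltxx.
Qed.

Lemma psdmx_invmx k (X : 'M[C]_k) : pdmx X -> psdmx (invmx X).
Proof.
move=> HX; have Xu := pdmx_unit HX; have [Xh HXv] := pdmx_psdmx HX.
have iXh : ctr (invmx X) = invmx X.
  by rewrite -[ctr _]mulmx1 -(mulmxV Xu) mulmxA -{2}Xh -ctrM mulmxV // ctr_scalar conjC1 mul1mx.
split => // v; have -> : invmx X = invmx X *m X *m invmx X by rewrite mulVmx // mul1mx.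
by have := HXv (invmx X *m v); rewrite ctrM iXh !mulmxA.
Qed.

Lemma ctr_mul_self_gt0 k (w : 'cV[C]_k) : w != 0 -> 0 < (ctr w *m w) 0 0.
Proof.
move=> w0; rewrite lt_def; have := (psdmx1 k).2 w; rewrite mulmx1 => ->; rewrite andbT.
apply: contraNneq w0; rewrite mxE => h; apply/eqP/matrixP => i j; rewrite ord1 mxE.
have hF (l : 'I_k) : true -> 0 <= ctr w 0 l * w l 0.
  by move=> _; rewrite !mxE mulrC mul_conjC_ge0.
have := psumr_eq0P hF h (i:=i) isT; rewrite !mxE => /eqP.
by rewrite mulf_eq0 conjC_eq0 orbb => /eqP.
Qed.

Lemma pdmx_rank1_add_scalar k (v : 'cV[C]_k) (e : C) :
  0 < e -> pdmx (v *m ctr v + e%:M).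
Proof.
move=> e0; split.
  by rewrite ctrD ctrM ctrK ctr_scalar (CrealP (gtr0_real e0)).
move=> w w0; rewrite mulmxDr mulmxDl mxE; apply: ltr_wpDl.
  have := psdmx_congr_diag_ge0 (ctr w *m v) 0 (psdmx1 1).
  by rewrite mulmx1 ctrM ctrK !mulmxA.
by rewrite mul_mx_scalar -scalemxAl mxE mulr_gt0 // ctr_mul_self_gt0.
Qed.

Lemma real_ge0_perturbation (a t : C) : a \is Num.real -> t \is Num.real ->
  (forall e : C, 0 < e -> 0 <= a + e * t) -> 0 <= a.
Proof.
move=> ra rt H; rewrite real_leNgt ?real0 //; apply/negP => alt.
have n1 : 0 < `|t| + 1 by rewrite ltr_wpDl.
have e0 : 0 < - a / (`|t| + 1) by rewrite divr_gt0 // oppr_gt0.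
have := H _ e0.
have -> : a + - a / (`|t| + 1) * t = a * ((`|t| + 1 - t) / (`|t| + 1)).
  by field; rewrite gt_eqF.
rewrite lt_geF // nmulr_rlt0 // divr_gt0 // subr_gt0.
by apply: le_lt_trans (real_ler_norm rt) _; rewrite ltrDl ltr01.
Qed.

Lemma psdmx_trace_pdmx k (D : 'M[C]_k) : ctr D = D ->
  (forall X, pdmx X -> 0 <= \tr (D *m X)) -> psdmx D.
Proof.
move=> Dh trD; split => // v.
apply: (real_ge0_perturbation (hermitian_form_real v Dh) (hermitian_mxtrace_real Dh)).
move=> e e0; have := trD _ (pdmx_rank1_add_scalar v e0).
by rewrite mulmxDr mxtraceD mul_mx_scalar mxtraceZ mulmxA mxtrace_mulC mulmxA trace_mx11.
Qed.

Lemma mxtrace_complete_square p k (L Y : 'M[C]_(p, k)) (X : 'M[C]_k) :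
  X \in unitmx -> ctr X = X ->
  \tr ((L *m X + Y) *m invmx X *m ctr (L *m X + Y)) =
  \tr (ctr L *m L *m X) + (\tr (ctr Y *m L))^* + \tr (ctr Y *m L)
  + \tr (ctr Y *m Y *m invmx X).
Proof.
move=> Xu Xh; set w := \tr (ctr Y *m L).
have trLL : \tr (L *m X *m invmx X *m (X *m ctr L)) = \tr (ctr L *m L *m X).
  by rewrite mulmxK // mulmxA mxtrace_mulC mulmxA.
have trLY : \tr (L *m X *m invmx X *m ctr Y) = w by rewrite mulmxK // mxtrace_mulC.
have trYL : \tr (Y *m invmx X *m (X *m ctr L)) = w^*.
  by rewrite mulmxA mulmxKV // -mxtrace_ctr ctrM ctrK mxtrace_mulC.
have trYY : \tr (Y *m invmx X *m ctr Y) = \tr (ctr Y *m Y *m invmx X).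
  by rewrite mxtrace_mulC mulmxA.
rewrite ctrD ctrM Xh !(mulmxDl, mulmxDr) !mxtraceD trLL trLY trYL trYY.
ring.
Qed.

End Matrices.

Section BlockOperator.
Variables (C : numClosedFieldType) (n m : nat).
Variables (phi : 'M[C]_n -> 'M[C]_m) (phis : 'M[C]_m -> 'M[C]_n).
Hypotheses (phi_pos : positive_map phi) (phis_adj : hs_adjoint phi phis).

Lemma phi_gram_hermitian (K : 'M[C]_n) :
  ctr (phi (ctr K *m K)) = phi (ctr K *m K).
Proof. exact: (phi_pos (psdmx_gram K)).1. Qed.

Lemma hs_sum_block_op (X : 'M[C]_m) (K : 'M[C]_n) (Y : 'M[C]_m) :
  X \in unitmx -> ctr X = X ->
  hs_sum (K, Y) (block_op phi phis X (K, Y)) =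
  \tr ((phi K *m X + Y) *m invmx X *m ctr (phi K *m X + Y))
  + \tr ((phi (ctr K *m K) - ctr (phi K) *m phi K) *m X).
Proof.
move=> Xu Xh; rewrite mxtrace_complete_square // /hs_sum /block_op /Rop /= !hsDr.
have -> : hs K (phis Y) = (\tr (ctr Y *m phi K))^* by rewrite hsC phis_adj.
have -> : hs K (K *m phis X) = \tr (phi (ctr K *m K) *m X).
  (* tr (K^* K phis X) = conj <phis X, K^* K> = conj <X, F> = tr (F X) *)
  have Kh : ctr (ctr K *m K) = ctr K *m K by rewrite ctrM ctrK.
  rewrite /hs mulmxA -{1}Kh -/(hs _ _) hsC phis_adj /hs Xh -mxtrace_ctr ctrM.
  by rewrite phi_gram_hermitian Xh.
by rewrite /hs mulmxBl mxtraceD raddfN /= mulmxA; ring.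
Qed.

Lemma block_op_psd_of_kadison :
  (forall K, loewner_le (ctr (phi K) *m phi K) (phi (ctr K *m K))) ->
  forall X, pdmx X -> psd_op (block_op phi phis X).
Proof.
move=> kadison X HX [K Y]; rewrite hs_sum_block_op ?pdmx_unit ?HX.1 //.
apply: addr_ge0; first exact/psdmx_congr_trace_ge0/psdmx_invmx.
by apply: psdmx_trace_mul_ge0; [apply: kadison | apply: pdmx_psdmx].
Qed.

Lemma kadison_of_block_op_psd :
  (forall X, pdmx X -> psd_op (block_op phi phis X)) ->
  forall K, loewner_le (ctr (phi K) *m phi K) (phi (ctr K *m K)).
Proof.
move=> blockpsd K; apply: psdmx_trace_pdmx.
  by rewrite ctrD ctrN ctrM ctrK phi_gram_hermitian.
move=> X HX; have := blockpsd X HX (K, - (phi K *m X)).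
by rewrite /psd_op hs_sum_block_op ?pdmx_unit ?HX.1 // subrr !mul0mx mxtrace0 add0r.
Qed.

End BlockOperator.

Local Open Scope complex_scope.

Theorem theorem4p1 (R : realType) (n m : nat)
  (phi : {linear 'M[R[i]]_n -> 'M[R[i]]_m})
  (phis : 'M[R[i]]_m -> 'M[R[i]]_n) :
  positive_map phi -> hs_adjoint phi phis ->
  ((forall K : 'M[R[i]]_n,
      loewner_le (ctr (phi K) *m phi K) (phi (ctr K *m K))) <->
   (forall X : 'M[R[i]]_m, pdmx X -> psd_op (block_op phi phis X))).
Proof.
move=> pos adj; split; [exact: block_op_psd_of_kadison | exact: kadison_of_block_op_psd].
Qed.
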